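(* Let $\mathcal{Z}=\langle c,G\rangle\subset\mathbb{R}^n$ be a zonotope, fix a reduction order for Girard reduction $\operatorname{GR}$, and let $P\in\mathbb{R}^{n\times n}$ be orthogonal. Then: (1) (Containment) $\mathcal{Z}\subseteq P\cdot\operatorname{GR}(P^\top\mathcal{Z})$. (2) (Volume bound) Let $G_{\mathrm{disc}}\in\mathbb{R}^{n\times m}$ be the submatrix of generators discarded by the reduction, $S=G_{\mathrm{disc}}G_{\mathrm{disc}}^\top$, and for orthogonal $P$ let $d(P)=|P^\top G_{\mathrm{disc}}|\mathbf{1}_m\in\mathbb{R}^n$ (entrywise absolute value), i.e. $d_i(P)=\|e_i^\top P^\top G_{\mathrm{disc}}\|_1$, and $\mathcal{B}(d(P))=\{x:|x_i|\le d_i(P)\ \forall i\}$ the corresponding axis-aligned box (the interval-hull term injected by Girard reduction in the rotated coordinates). Then $$\mathrm{vol}(\mathcal{B}(d(P)))=2^n\prod_{i=1}^n d_i(P)\le(2\sqrt m)^n\sqrt{\prod_{i=1}^n(P^\top SP)_{ii}},$$ and the right-hand side is minimized over all orthogonal $P$ by any PCA basis of $G_{\mathrm{disc}}$, i.e. any orthogonal $P$ for which $P^\top SP$ is diagonal.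
   Context: A zonotope is $\langle c,G\rangle=\{c+G\xi:\xi\in[-1,1]^p\}$ with $c\in\mathbb{R}^n$, $G\in\mathbb{R}^{n\times p}$; for a matrix $Q$, $Q\langle c,G\rangle=\langle Qc,QG\rangle$. Girard order reduction $\operatorname{GR}$ with target order $\rho$: given $\langle c,G\rangle$, keep the $\rho n-n$ columns of $G$ with largest Euclidean norm (index set $\mathcal{I}_{\mathrm{keep}}$), and replace the remaining (discarded) columns $\mathcal{I}_{\mathrm{disc}}$ by their axis-aligned interval hull with half-widths $d_i=\sum_{j\in\mathcal{I}_{\mathrm{disc}}}|G_{ij}|$; the result is $\operatorname{GR}(\langle c,G\rangle)=\langle c,[G_{:,\mathcal{I}_{\mathrm{keep}}},\mathrm{diag}(d)]\rangle$. It satisfies $\mathcal{Z}\subseteq\operatorname{GR}(\mathcal{Z})$. $\mathrm{vol}$ is Lebesgue volume, $\mathbf{1}_m$ the all-ones vector, $e_i$ the $i$-th standard basis vector. *)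

From mathcomp Require Import all_boot all_order all_algebra.
Set Implicit Arguments. Unset Strict Implicit. Unset Printing Implicit Defensive.
Import Order.TTheory GRing.Theory Num.Theory.
Local Open Scope ring_scope.

Section Zono.
Variable R : rcfType.

Definition in_zonotope n p (c : 'cV[R]_n) (G : 'M[R]_(n, p)) (x : 'cV[R]_n) : Prop :=
  exists xi : 'cV[R]_p, (forall j, `|xi j 0| <= 1) /\ x = c + G *m xi.

Definition orthogonal_mx n (P : 'M[R]_n) : Prop := P^T *m P = 1%:M.

Definition colnorm n p (G : 'M[R]_(n, p)) (j : 'I_p) : R :=
  Num.sqrt (\sum_(i < n) G i j ^+ 2).

Definition girard_keep n p (rho : nat) (G : 'M[R]_(n, p)) (K : {set 'I_p}) : Prop :=
  #|K| = minn p (rho * n - n) /\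
  (forall j j', j \in K -> j' \notin K -> colnorm G j' <= colnorm G j).

Definition colsub_set n p (G : 'M[R]_(n, p)) (A : {set 'I_p}) : 'M[R]_(n, #|A|) :=
  colsub (fun k : 'I_#|A| => enum_val k) G.

Definition ihull_halfwidths n p (G : 'M[R]_(n, p)) (K : {set 'I_p}) : 'rV[R]_n :=
  \row_i \sum_(j in ~: K) `|G i j|.

Definition girard_gens n p (G : 'M[R]_(n, p)) (K : {set 'I_p}) : 'M[R]_(n, #|K| + n) :=
  row_mx (colsub_set G K) (diag_mx (ihull_halfwidths G K)).

Definition dvec n m (P : 'M[R]_n) (Gd : 'M[R]_(n, m)) (i : 'I_n) : R :=
  \sum_(j < m) `|(P^T *m Gd) i j|.

Definition box_volume n (d : 'I_n -> R) : R := 2 ^+ n * \prod_(i < n) d i.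

Definition pca_bound n m (P : 'M[R]_n) (S : 'M[R]_n) : R :=
  (2 * Num.sqrt (m%:R)) ^+ n * Num.sqrt (\prod_(i < n) (P^T *m S *m P) i i).

End Zono.

(* Containment: after rotating by P^T, Girard reduction keeps part of the
   generators and covers the sum of the others, coordinate by coordinate, by the
   interval hull diag(d); rotating back by P = (P^T)^-1 gives the claim.  This
   holds for any kept set.
   Volume bound: by Cauchy-Schwarz, d_i = |row_i (P^T G_disc)|_1 is at most
   sqrt m times the Euclidean norm of that row, i.e. sqrt m * sqrt (P^T S P)_ii.
   Optimality: by Hadamard's inequality prod_i (P^T S P)_ii >= det (P^T S P),
   which equals det S for every orthogonal P, with equality when P^T S P is
   diagonal. *)
From mathcomp Require Import all_boot all_order all_algebra.
From mathcomp Require Import ring.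
Set Implicit Arguments. Unset Strict Implicit. Unset Printing Implicit Defensive.
Import Order.TTheory GRing.Theory Num.Theory.
Local Open Scope ring_scope.

Section Hadamard.
Variable R : realFieldType.

Lemma gram_diag_ge0 n m (B : 'M[R]_(n, m)) i : 0 <= (B *m B^T) i i.
Proof. by rewrite !mxE; apply: sumr_ge0 => k _; rewrite !mxE -expr2 sqr_ge0. Qed.

Lemma gram_rv_eq0 m (b : 'rV[R]_m) : (b *m b^T) 0 0 = 0 -> b = 0.
Proof.
rewrite !mxE => /eqP; rewrite psumr_eq0 => [/allP b0|k _]; last first.
  by rewrite !mxE -expr2 sqr_ge0.
apply/matrixP => i j; rewrite (ord1 i) !mxE.
move/eqP: (b0 j (mem_index_enum _)); rewrite !mxE -expr2 => /eqP.
by rewrite sqrf_eq0 => /eqP.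
Qed.

(* The rows of B projected onto the orthogonal complement of b; for b = 0 the
   inverse is the junk value 0^-1 = 0 and the projection is B itself. *)
Definition orth_proj m n (b : 'rV[R]_m) (B : 'M[R]_(n, m)) : 'M[R]_(n, m) :=
  B - ((b *m b^T) 0 0)^-1 *: (B *m b^T) *m b.

Section OrthProj.
Variables (m n : nat) (b : 'rV[R]_m) (B : 'M[R]_(n, m)).

Lemma orth_proj_perp : orth_proj b B *m b^T = 0.
Proof.
rewrite /orth_proj; set a := (b *m b^T) 0 0.
have [a0|an0] := eqVneq a 0; first by rewrite (gram_rv_eq0 a0) trmx0 mulmx0.
rewrite mulmxBl -mulmxA [b *m b^T]mx11_scalar -/a mul_mx_scalar scalerA.
by rewrite divff // scale1r subrr.
Qed.

Lemma det_gram_col_mx :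
  \det (col_mx b B *m (col_mx b B)^T) =
  (b *m b^T) 0 0 * \det (orth_proj b B *m (orth_proj b B)^T).
Proof.
set C := orth_proj b B; pose k := ((b *m b^T) 0 0)^-1 *: (B *m b^T).
(* L subtracts from each row of B its component along b, and det L = 1. *)
pose L : 'M_(1 + n) := block_mx 1%:M 0 (- k) 1%:M.
have LB : L *m col_mx b B = col_mx b C.
  by rewrite mul_block_col !mul1mx mul0mx addr0 mulNmx addrC.
have bC : b *m C^T = 0 by rewrite -[b]trmxK -trmx_mul orth_proj_perp trmx0.
have <- : \det (L *m (col_mx b B *m (col_mx b B)^T) *m L^T) =
          \det (col_mx b B *m (col_mx b B)^T).
  by rewrite !det_mulmx det_tr det_lblock !det1 !mul1r mulr1.
rewrite -!mulmxA -trmx_mul mulmxA LB tr_col_mx mul_col_row orth_proj_perp bC.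
by rewrite det_lblock det_mx11.
Qed.

Lemma gram_orth_proj_diag_le i :
  (orth_proj b B *m (orth_proj b B)^T) i i <= (B *m B^T) i i.
Proof.
have -> : orth_proj b B *m (orth_proj b B)^T = orth_proj b B *m B^T.
  rewrite {2}/orth_proj linearB /= trmx_mul mulmxBr mulmxA orth_proj_perp.
  by rewrite mul0mx subr0.
rewrite mulmxBl -mulmxA mxE gerDl mxE oppr_le0 mxE big_ord1.
have -> : (b *m B^T) 0 i = (B *m b^T) i 0 by rewrite -[b]trmxK -trmx_mul trmxK mxE.
by rewrite mxE -mulrA -expr2 mulr_ge0 ?invr_ge0 ?gram_diag_ge0 ?sqr_ge0.
Qed.

End OrthProj.

Lemma det_gram_le_prod_diag n m (B : 'M[R]_(n, m)) :
  \det (B *m B^T) <= \prod_(i < n) (B *m B^T) i i.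
Proof.
elim: n B => [|n IH] B; first by rewrite det_mx00 big_ord0.
rewrite -[n.+1]/(1 + n)%N in B *.
have [b [B' ->]] : exists b : 'rV_m, exists B' : 'M_(n, m), B = col_mx b B'.
  by exists (usubmx B), (dsubmx B); rewrite vsubmxK.
rewrite det_gram_col_mx tr_col_mx mul_col_row big_split_ord big_ord1 block_mxEul.
apply: ler_wpM2l; first exact: gram_diag_ge0.
apply: le_trans (IH _) _; apply: ler_prod => i _.
by rewrite gram_diag_ge0 block_mxEdr gram_orth_proj_diag_le.
Qed.

End Hadamard.

Lemma sqr_sum_le (R : realDomainType) m (x : 'I_m -> R) :
  (\sum_j x j) ^+ 2 <= m%:R * \sum_j x j ^+ 2.
Proof.
(* 2 (sum_j x_j)^2 = sum_{j,k} 2 x_j x_k <= sum_{j,k} (x_j^2 + x_k^2) = 2 m sum_j x_j^2 *)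
have sqr_sumE : (\sum_j x j) ^+ 2 = \sum_j \sum_k (x j * x k).
  by rewrite expr2 big_distrl; apply: eq_bigr => j _; rewrite big_distrr.
have sum_pairsE : \sum_j \sum_k (x j ^+ 2 + x k ^+ 2) = 2 * (m%:R * \sum_j x j ^+ 2).
  under eq_bigr do rewrite big_split /= sumr_const card_ord.
  rewrite big_split /= sumr_const card_ord sumrMnl -[_ *+ m]mulr_natl; ring.
rewrite -(@ler_pM2l _ 2) // -sum_pairsE sqr_sumE mulr_sumr; apply: ler_sum => j _.
rewrite mulr_sumr; apply: ler_sum => k _.
have -> : x j ^+ 2 + x k ^+ 2 = 2 * (x j * x k) + (x j - x k) ^+ 2 by ring.
by rewrite lerDl sqr_ge0.
Qed.

Lemma sum_norm_le_sqrt (R : rcfType) m (a : 'I_m -> R) :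
  \sum_j `|a j| <= Num.sqrt m%:R * Num.sqrt (\sum_j a j ^+ 2).
Proof.
rewrite -sqrtrM // -[X in X <= _]ger0_norm ?sumr_ge0 // -sqrtr_sqr ler_wsqrtr //.
by under [X in _ <= _ * X]eq_bigr do rewrite -real_normK ?num_real //; apply: sqr_sum_le.
Qed.

Lemma sqrtr_prod (R : rcfType) n (f : 'I_n -> R) :
  (forall i, 0 <= f i) -> Num.sqrt (\prod_(i < n) f i) = \prod_(i < n) Num.sqrt (f i).
Proof.
elim: n f => [|n IH] f f_ge0; first by rewrite !big_ord0 sqrtr1.
by rewrite !big_ord_recr /= sqrtrM ?IH ?prodr_ge0.
Qed.

Section GirardReduction.
Variable R : rcfType.

Lemma diag_mx_box_preimage n (d : 'rV[R]_n) (v : 'cV[R]_n) :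
  (forall i, `|v i 0| <= d 0 i) ->
  exists z : 'cV[R]_n, (forall i, `|z i 0| <= 1) /\ diag_mx d *m z = v.
Proof.
move=> vd; exists (\col_i (v i 0 / d 0 i)); split => [i|].
  rewrite mxE normrM normfV; have [d0|dn0] := eqVneq (d 0 i) 0.
    by rewrite d0 normr0 invr0 mulr0.
  by rewrite ler_pdivrMr ?mul1r ?normr_gt0 // (le_trans _ (ler_norm _)).
apply/matrixP => i j; rewrite (ord1 j) mul_diag_mx !mxE.
have [d0|dn0] := eqVneq (d 0 i) 0.
  by move: (vd i); rewrite d0 normr_le0 => /eqP ->; rewrite mul0r.
by rewrite mulrCA mulfV ?mulr1.
Qed.

Lemma in_zonotope_row_mx n p q (c : 'cV[R]_n)
    (G1 : 'M[R]_(n, p)) (G2 : 'M[R]_(n, q)) (z1 : 'cV[R]_p) (z2 : 'cV[R]_q) :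
  (forall j, `|z1 j 0| <= 1) -> (forall j, `|z2 j 0| <= 1) ->
  in_zonotope c (row_mx G1 G2) (c + (G1 *m z1 + G2 *m z2)).
Proof.
move=> z1_le z2_le; exists (col_mx z1 z2); rewrite mul_row_col; split => // j.
by rewrite -(splitK j); case: split => k /=; rewrite ?col_mxEu ?col_mxEd.
Qed.

Lemma colsub_set_mul_col n p (G : 'M[R]_(n, p)) (K : {set 'I_p}) (xi : 'cV[R]_p) i :
  (colsub_set G K *m \col_k xi (enum_val k) 0) i 0 = \sum_(j in K) G i j * xi j 0.
Proof.
rewrite mxE (big_enum_val (A := mem K) (fun j => G i j * xi j 0)) /=.
by apply: eq_bigr => k _; rewrite !mxE.
Qed.

Lemma in_zonotope_girard n p (c : 'cV[R]_n) (G : 'M[R]_(n, p)) (K : {set 'I_p}) x :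
  in_zonotope c G x -> in_zonotope c (girard_gens G K) x.
Proof.
move=> [xi [xi_le ->]].
pose v : 'cV_n := \col_i \sum_(j in ~: K) G i j * xi j 0.
have [|z [z_le dz]] := @diag_mx_box_preimage n (ihull_halfwidths G K) v.
  move=> i; rewrite !mxE; apply: le_trans (ler_norm_sum _ _ _) _.
  by apply: ler_sum => j _; rewrite normrM ler_piMr.
have -> : G *m xi = colsub_set G K *m \col_k xi (enum_val k) 0
                    + diag_mx (ihull_halfwidths G K) *m z.
  apply/matrixP => i j; rewrite (ord1 j) dz mxE [in RHS]mxE colsub_set_mul_col mxE.
  by rewrite (bigID (mem K)) /=; congr (_ + _); apply: eq_bigl => l; rewrite in_setC.
by apply: in_zonotope_row_mx => // k; rewrite mxE.
Qed.

Lemma in_zonotope_mulmx n n' p (A : 'M[R]_(n', n)) (c : 'cV[R]_n) (G : 'M[R]_(n, p)) x :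
  in_zonotope c G x -> in_zonotope (A *m c) (A *m G) (A *m x).
Proof. by move=> [xi [xi_le ->]]; exists xi; rewrite mulmxDr mulmxA. Qed.

End GirardReduction.

Lemma det_conj_orthogonal (R : comNzRingType) n (P S : 'M[R]_n) :
  P^T *m P = 1%:M -> \det (P^T *m S *m P) = \det S.
Proof.
by move=> PtP; rewrite !det_mulmx mulrC mulrA -det_mulmx (mulmx1C PtP) det1 mul1r.
Qed.

Section PCABound.
Variables (R : rcfType) (n m : nat) (Gd : 'M[R]_(n, m)).
Let S := Gd *m Gd^T.

Lemma conj_gram (P : 'M[R]_n) : P^T *m S *m P = (P^T *m Gd) *m (P^T *m Gd)^T.
Proof. by rewrite trmx_mul trmxK /S !mulmxA. Qed.

Lemma dvec_le_sqrt (P : 'M[R]_n) i :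
  dvec P Gd i <= Num.sqrt m%:R * Num.sqrt ((P^T *m S *m P) i i).
Proof.
rewrite conj_gram mxE; under eq_bigr do rewrite [_^T _ _]mxE -expr2.
exact: sum_norm_le_sqrt.
Qed.

Lemma box_volume_le_pca_bound (P : 'M[R]_n) :
  box_volume (dvec P Gd) <= pca_bound m P S.
Proof.
rewrite /box_volume /pca_bound exprMn -mulrA ler_wpM2l ?exprn_ge0 //.
rewrite sqrtr_prod => [|i]; last by rewrite conj_gram gram_diag_ge0.
have -> : Num.sqrt m%:R ^+ n = \prod_(i < n) Num.sqrt (m%:R : R).
  by rewrite prodr_const card_ord.
rewrite -big_split /=; apply: ler_prod => i _.
by rewrite sumr_ge0 ?dvec_le_sqrt.
Qed.

Lemma pca_bound_diag_le (P Q : 'M[R]_n) :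
  orthogonal_mx P -> orthogonal_mx Q -> is_diag_mx (Q^T *m S *m Q) ->
  pca_bound m Q S <= pca_bound m P S.
Proof.
move=> orthP orthQ /is_diag_mx_is_trig/det_trig diagQ.
rewrite /pca_bound -diagQ ler_wpM2l ?exprn_ge0 ?mulr_ge0 ?sqrtr_ge0 // ler_wsqrtr //.
rewrite det_conj_orthogonal // -(det_conj_orthogonal S orthP) conj_gram.
exact: det_gram_le_prod_diag.
Qed.

End PCABound.

Theorem lemma3p3 (R : rcfType) (n p rho : nat) (c : 'cV[R]_n) (G : 'M[R]_(n, p)) :
  (* (1) containment: Z ⊆ P · GR(P^T Z), for every orthogonal P and every
     admissible Girard kept-set K for the rotated generators P^T G *)
  (forall (P : 'M[R]_n) (K : {set 'I_p}),
     orthogonal_mx P -> girard_keep rho (P^T *m G) K ->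
     forall x, in_zonotope c G x ->
       exists y, in_zonotope (P^T *m c) (girard_gens (P^T *m G) K) y /\ x = P *m y) /\
  (* (2) volume bound and PCA optimality, G_disc = columns discarded by the reduction *)
  (forall K : {set 'I_p}, girard_keep rho G K ->
     let Gd := colsub_set G (~: K) in
     let m := #|~: K| in
     let S := Gd *m Gd^T in
     (forall P : 'M[R]_n, orthogonal_mx P ->
        box_volume (dvec P Gd) = 2 ^+ n * \prod_(i < n) dvec P Gd i /\
        box_volume (dvec P Gd) <= pca_bound m P S) /\
     (forall Q : 'M[R]_n, orthogonal_mx Q -> is_diag_mx (Q^T *m S *m Q) ->
        forall P : 'M[R]_n, orthogonal_mx P -> pca_bound m Q S <= pca_bound m P S)).
Proof.
split=> [P K orthP _ x x_in | K _ Gd m S].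
  exists (P^T *m x); split; first exact/in_zonotope_girard/in_zonotope_mulmx.
  by rewrite mulmxA (mulmx1C orthP) mul1mx.
split=> [P _ | Q orthQ Qdiag P orthP]; last exact: pca_bound_diag_le.
by split; last exact: box_volume_le_pca_bound.
Qed.
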